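(* Let $\mathcal{F}$, $B_1,\dots,B_m$ be as in the context. Suppose there exist distinct sets $Y_1,\dots,Y_s\in\binom{[n]}{d+1}\setminus\mathcal{F}$ and sets $Z_i\subseteq Y_i$ with $|Z_i|=d$ ($i\in[s]$) such that: (1) $Z_i\neq B_j$ for all $i\in[s]$, $j\in[m]$; (2) $|Y_i\cap Y_j|\le d-1$ for all distinct $i,j\in[s]$; (3) for all $i<j$ in $[s]$ there is no $k\in[m]$ with both $F_k\cap Y_i=Z_i$ and $F_k\cap Y_j=B_k$. Then $|\mathcal{F}|\le\binom{n}{d}-s$.
   Context: Let $\mathcal{F}=\{F_1,\dots,F_m\}\subseteq\binom{[n]}{d+1}$ consist of distinct sets and have VC-dimension at most $d$ (no $(d+1)$-set $S$ is shattered, i.e. no $S$ such that every $A\subseteq S$ equals $F\cap S$ for some $F\in\mathcal{F}$). For $i\in[m]$, call $B\subsetneq F_i$ admissible for $F_i$ if $F\cap F_i\neq B$ for every $F\in\mathcal{F}$ (admissible sets exist by the VC-dimension assumption). For each $i$, $B_i$ is a fixed admissible set for $F_i$ of maximum cardinality among all admissible sets for $F_i$. *)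

From mathcomp Require Import all_boot.
Set Implicit Arguments. Unset Strict Implicit. Unset Printing Implicit Defensive.

Definition shattered (n m : nat) (F : 'I_m -> {set 'I_n}) (S : {set 'I_n}) : Prop :=
  forall A : {set 'I_n}, A \subset S -> exists k : 'I_m, F k :&: S = A.

Definition vc_dim_le (n m : nat) (F : 'I_m -> {set 'I_n}) (d : nat) : Prop :=
  forall S : {set 'I_n}, #|S| = d.+1 -> ~ shattered F S.

Definition admissible (n m : nat) (F : 'I_m -> {set 'I_n}) (i : 'I_m) (B : {set 'I_n}) : Prop :=
  B \proper F i /\ forall k : 'I_m, F k :&: F i != B.

Definition max_admissible (n m : nat) (F : 'I_m -> {set 'I_n}) (i : 'I_m) (B : {set 'I_n}) : Prop :=
  admissible F i B /\ forall B' : {set 'I_n}, admissible F i B' -> #|B'| <= #|B|.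

From mathcomp Require Import all_boot all_algebra.
From mathcomp Require Import ring zify.
Set Implicit Arguments. Unset Strict Implicit. Unset Printing Implicit Defensive.
Import GRing.Theory Num.Theory.

(* For a (d+1)-set F and a proper subset B with c = |F \ B|, consider the
   function on d-sets T that vanishes unless B ⊆ T and otherwise equals
   (-1)^j j! (c-1-j)! with j = |T ∩ (F \ B)|.  Summed over the d-subsets of a
   (d+1)-set G, it vanishes unless G = F or G ∩ F = B, and it is nonzero at
   G = F.  For the m + s pairs (F_k, B_k) and (Y_l, Z_l), hypotheses (1)-(3)
   make the matrix of these sums over the sets F_k, Y_l triangular for a
   suitable order, so the m + s functions are linearly independent in the
   C(n, d)-dimensional space of functions on d-subsets of [n]. *)

Section BigopsAndRank.
Local Open Scope ring_scope.

Lemma big_subsets_delete1 (T : finType) (V : nmodType) (psi : {set T} -> V)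
    (G : {set T}) :
  \sum_(A : {set T} | (A \subset G) && (#|A|.+1 == #|G|)) psi A
  = \sum_(x in G) psi (G :\ x).
Proof.
have cardD1 x : x \in G -> #|G| = #|G :\ x|.+1.
  by move=> xG; rewrite (cardsD1 x G) xG.
rewrite -(big_imset _ (h := fun x => G :\ x)) /=; last first.
  move=> x y xG yG /setP/(_ y); rewrite !inE eqxx yG andbT.
  by case: eqP.
apply: eq_bigl => A; apply/andP/imsetP => [[AG /eqP cA]|[x xG ->]]; last first.
  by rewrite subsetDl (cardD1 x xG).
have /properP [_ [x xG xA]] : A \proper G by rewrite properEcard AG -cA ltnSn.
exists x => //; apply/eqP; rewrite eqEcard -ltnS -cardD1 // -cA leqnn andbT.
by apply/subsetP => y yA; rewrite !inE (subsetP AG) // andbT; apply: contraNneq xA => <-.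
Qed.

Lemma triangular_rows_free (K : idomainType) (I : finType) (M : I -> I -> K)
    (p : I -> nat) (a : I -> K) :
  (forall i, M i i != 0) ->
  (forall i j, i != j -> M i j != 0 -> (p j < p i)%N) ->
  (forall j, \sum_i a i * M i j = 0) -> forall i, a i = 0.
Proof.
move=> Mii Mp aM0 i; apply/eqP; apply: contraT => ai0.
have [j aj0 jmax] := @arg_maxnP I i (fun k => a k != 0) p ai0.
have := aM0 j; rewrite (bigD1 j) //= big1 ?addr0.
  by move/eqP; rewrite mulf_eq0 (negbTE aj0) (negbTE (Mii j)).
move=> k kj; have [->|ak0] := eqVneq (a k) 0; first by rewrite mul0r.
have [->|Mkj] := eqVneq (M k j) 0; first by rewrite mulr0.
by have /= := jmax k ak0; rewrite leqNgt (Mp k j kj Mkj).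
Qed.

Lemma card_le_free_product (K : fieldType) (I J : finType) (D : {pred J})
    (X : I -> J -> K) (P : J -> I -> K) :
  (forall a : I -> K,
     (forall j, \sum_i a i * \sum_(t in D) X i t * P t j = 0) ->
     forall i, a i = 0) ->
  (#|I| <= #|D|)%N.
Proof.
move=> free.
pose MX := \matrix_(i < #|I|, t < #|D|) X (enum_val i) (enum_val t).
pose MP := \matrix_(t < #|D|, j < #|I|) P (enum_val t) (enum_val j).
suff /eqP <- : row_free (MX *m MP).
  exact: leq_trans (mxrankM_maxr _ _) (rank_leq_row _).
apply/inj_row_free => v vMXP0; apply/rowP => r; rewrite mxE -(enum_valK r).
apply: (free (fun i => v 0 (enum_rank i))) => j.
move/rowP: vMXP0 => /(_ (enum_rank j)); rewrite !mxE; apply: etrans.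
rewrite (big_enum_val (fun i => v 0 (enum_rank i) * _)) /=.
apply: eq_bigr => r' _; rewrite enum_valK mxE big_enum_val.
by congr (_ * _); apply: eq_bigr => t _; rewrite !mxE enum_rankK.
Qed.

End BigopsAndRank.

Section InclusionPairing.
Variables (R : numDomainType) (T : finType).
Local Open Scope ring_scope.

(* Up to the factor (c-1)!, weight c j = (-1)^j / binomial (c-1) j: the weights
   for which j w(j-1) + (c-j) w(j) vanishes when 0 < j < c. *)
Definition weight (c j : nat) : R := (-1) ^+ j * (j`! * (c.-1 - j)`!)%:R.

Lemma weight_cancel c j :
  (0 < j < c)%N -> weight c j.-1 *+ j + weight c j *+ (c - j) = 0.
Proof.
case: j => // i /andP [_ lt_ic]; rewrite /weight /=; set e := (c.-1 - i.+1)%N.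
have -> : (c.-1 - i = e.+1)%N by rewrite /e; lia.
have -> : (c - i.+1 = e.+1)%N by rewrite /e; lia.
rewrite !factS !natrM exprS.
ring.
Qed.

Lemma weight_neq0 c j : weight c j != 0.
Proof. by rewrite mulf_eq0 signr_eq0 pnatr_eq0 muln_eq0 !gtn_eqF ?fact_gt0. Qed.

Definition test_fun (F B A : {set T}) : R :=
  if B \subset A then weight #|F :\: B| #|A :&: (F :\: B)| else 0.

(* The value at G of the image of [test_fun F B] under the transposed
   inclusion map from d-sets to (d+1)-sets. *)
Definition incl_pairing (F B G : {set T}) : R :=
  \sum_(x in G) test_fun F B (G :\ x).

Lemma incl_pairingE (F B G : {set T}) :
  B \subset G -> B \subset F -> #|G| = #|F| ->
  incl_pairing F B G =
    weight #|F :\: B| #|G :&: (F :\: B)|.-1 *+ #|G :&: (F :\: B)|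
    + weight #|F :\: B| #|G :&: (F :\: B)| *+ (#|F :\: B| - #|G :&: (F :\: B)|).
Proof.
move=> BG BF cGF; set C := F :\: B.
have test_funE x : x \in G -> x \notin B ->
    test_fun F B (G :\ x) = weight #|C| #|(G :\ x) :&: C|.
  move=> xG xB; rewrite /test_fun ifT //; apply/subsetP => y yB.
  by rewrite !inE (subsetP BG) // andbT; apply: contraNneq xB => <-.
have GBC : (G :\: B) :&: C = G :&: C.
  by apply/setP => y; rewrite !inE; case: (y \in B); rewrite ?andbF.
rewrite /incl_pairing (big_setID B) /= big1 ?add0r => [|x /setIP [_ xB]]; last first.
  rewrite /test_fun ifF //; apply/negP => /subsetP/(_ x xB).
  by rewrite !inE eqxx.
have cGBC : #|(G :\: B) :\: C| = (#|C| - #|G :&: C|)%N.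
  have cGB : #|G :\: B| = #|C| by rewrite !cardsD (setIidPr BG) (setIidPr BF) cGF.
  by rewrite -cGB -(cardsID C (G :\: B)) GBC addKn.
rewrite (big_setID C) /= GBC -cGBC -!sumr_const; congr (_ + _).
- apply: eq_bigr => x /setIP [xG xC]; have /setDP [_ xB] := xC.
  by rewrite test_funE // setIDAC [#|G :&: C|](cardsD1 x) in_setI xG xC.
- apply: eq_bigr => x /setDP [/setDP [xG xB] xC]; rewrite test_funE //.
  by rewrite setIDAC (setDidPl _) // disjoint_sym disjoints1 inE (negbTE xC) andbF.
Qed.

Lemma incl_pairing_eq0 (F B G : {set T}) :
  B \proper F -> #|G| = #|F| -> G != F -> G :&: F != B -> incl_pairing F B G = 0.
Proof.
move=> pBF cGF GF GFB; have BF := proper_sub pBF.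
have [BG|nBG] := boolP (B \subset G); last first.
  apply: big1 => x _; rewrite /test_fun ifF //.
  by apply: contraNF nBG => /subset_trans; apply; apply: subsetDl.
rewrite incl_pairingE //; apply: weight_cancel; set C := F :\: B.
rewrite card_gt0 (ltn_leqif (subset_leqif_cards (subsetIr G C))).
apply/andP; split.
- apply: contraNneq GFB => GC0; apply/eqP/setP => y.
  move/setP: GC0 => /(_ y); rewrite !inE.
  by case yB: (y \in B); rewrite ?(subsetP BG y yB) ?(subsetP BF y yB) ?andbT.
- apply: contraNneq GF => GCC; rewrite eq_sym eqEcard cGF leqnn andbT.
  apply/subsetP => y yF; have [/(subsetP BG)//|yB] := boolP (y \in B).
  by have /setIP [] : y \in G :&: C by rewrite GCC !inE yB.
Qed.

Lemma incl_pairing_neq0 (F B : {set T}) : B \proper F -> incl_pairing F B F != 0.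
Proof.
move=> pBF; rewrite incl_pairingE ?proper_sub // (setIidPr (subsetDl F B)).
rewrite subnn mulr0n addr0 mulrn_eq0 negb_or weight_neq0 andbT cards_eq0.
by rewrite setD_eq0; move: pBF; rewrite properE => /andP [].
Qed.

End InclusionPairing.

Section TracePairs.
Variables (n d m s : nat).
Variables (F B : 'I_m -> {set 'I_n}) (Y Z : 'I_s -> {set 'I_n}).
Hypothesis F_inj : injective F.
Hypothesis F_card : forall k, #|F k| = d.+1.
Hypothesis B_adm : forall k, admissible F k (B k).
Hypothesis Y_inj : injective Y.
Hypothesis Y_card : forall l, #|Y l| = d.+1.
Hypothesis Y_notF : forall l k, Y l != F k.
Hypothesis Z_sub : forall l, Z l \subset Y l.
Hypothesis Z_card : forall l, #|Z l| = d.
Hypothesis Z_notB : forall l k, Z l != B k.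
Hypothesis Y_meet : forall l l', l != l' -> (#|Y l :&: Y l'| + 1 <= d)%N.
Hypothesis no_trace_pair : forall l l' : 'I_s, (l < l')%N ->
  ~ exists k : 'I_m, F k :&: Y l = Z l /\ F k :&: Y l' = B k.

Definition FY (i : 'I_m + 'I_s) : {set 'I_n} :=
  match i with inl k => F k | inr l => Y l end.

Definition BZ (i : 'I_m + 'I_s) : {set 'I_n} :=
  match i with inl k => B k | inr l => Z l end.

(* F k sits just above every Y l meeting it in B k; by (1) and (3) every Y l
   meeting F k in Z l sits above F k. *)
Definition height (i : 'I_m + 'I_s) : nat :=
  match i with
  | inl k => (\max_(l | Y l :&: F k == B k) l.+1).*2
  | inr l => l.*2.+1
  end.

Lemma card_FY i : #|FY i| = d.+1.
Proof. by case: i. Qed.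

Lemma FY_inj : injective FY.
Proof.
case=> [k|l] [k'|l'] /= E.
- by rewrite (F_inj E).
- by move/eqP: (Y_notF l' k); rewrite E.
- by move/eqP: (Y_notF l k'); rewrite E.
- by rewrite (Y_inj E).
Qed.

Lemma BZ_proper i : BZ i \proper FY i.
Proof.
case: i => [k|l] /=; first by case: (B_adm k).
by rewrite properEcard Z_sub Z_card Y_card ltnSn.
Qed.

Lemma height_trace i j : i != j -> FY j :&: FY i = BZ i -> (height j < height i)%N.
Proof.
case: i j => [k|l] [k'|l'] /= ij E.
- by case: (B_adm k) => _ /(_ k')/eqP.
- rewrite -doubleS leq_double.
  by apply: (leq_bigmax_cond (P := fun l => Y l :&: F k == B k)); rewrite E.
- rewrite ltnS leq_double; apply/bigmax_leqP => l0 /eqP YFB; rewrite ltnNge; apply/negP.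
  rewrite leq_eqVlt => /orP [/eqP/val_inj ll0 | ll0].
    by move/eqP: (Z_notB l k'); rewrite -E -YFB ll0 setIC.
  by apply: (no_trace_pair ll0); exists k'; split; rewrite // setIC.
- have ll' : l != l' by apply: contraNneq ij => ->.
  by have := Y_meet ll'; rewrite setIC E Z_card addn1 ltnn.
Qed.

Lemma height_pairing i j :
  i != j -> incl_pairing rat (FY i) (BZ i) (FY j) != 0%R -> (height j < height i)%N.
Proof.
move=> ij; apply: contraNT => hji; apply/eqP/incl_pairing_eq0.
- exact: BZ_proper.
- by rewrite !card_FY.
- by rewrite (inj_eq FY_inj) eq_sym.
- exact: contraNneq (height_trace ij) hji.
Qed.

Lemma card_trace_pairs_le : (m + s <= 'C(n, d))%N.
Proof.
have -> : (m + s = #|{: 'I_m + 'I_s}|)%N by rewrite card_sum !card_ord.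
rewrite -[n]card_ord -card_draws.
apply: (@card_le_free_product _ _ _ _ (fun i A => test_fun rat (FY i) (BZ i) A)
          (fun A j => (A \subset FY j)%:R%R)) => a a_free.
apply: (@triangular_rows_free _ _ (fun i j => incl_pairing rat (FY i) (BZ i) (FY j)) height).
- by move=> i; apply/incl_pairing_neq0/BZ_proper.
- exact: height_pairing.
- move=> j; rewrite -[RHS](a_free j); apply: eq_bigr => i _; congr (_ * _)%R.
  rewrite /incl_pairing -big_subsets_delete1 big_mkcond [RHS]big_mkcond /=.
  apply: eq_bigr => A _; rewrite inE card_FY eqSS.
  by case: (A \subset FY j); case: (#|A| == d); rewrite ?mulr1 ?mulr0.
Qed.

End TracePairs.

Theorem claim4p3 (n d m s : nat)
  (F : 'I_m -> {set 'I_n}) (B : 'I_m -> {set 'I_n})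
  (Y : 'I_s -> {set 'I_n}) (Z : 'I_s -> {set 'I_n})
  (F_inj : injective F)
  (F_card : forall i, #|F i| = d.+1)
  (F_vc : vc_dim_le F d)
  (B_max : forall i, max_admissible F i (B i))
  (Y_inj : injective Y)
  (Y_card : forall i, #|Y i| = d.+1)
  (Y_notF : forall i k, Y i != F k)
  (Z_sub : forall i, Z i \subset Y i)
  (Z_card : forall i, #|Z i| = d)
  (H1 : forall i j, Z i != B j)
  (H2 : forall i j, i != j -> #|Y i :&: Y j| + 1 <= d)
  (H3 : forall i j : 'I_s, (i < j)%N ->
          ~ exists k : 'I_m, F k :&: Y i = Z i /\ F k :&: Y j = B k) :
  (m + s <= 'C(n, d))%N.
Proof.
have B_adm k : admissible F k (B k) by case: (B_max k).
exact: card_trace_pairs_le F_inj F_card B_adm Y_inj Y_card Y_notF Z_sub Z_card H1 H2 H3.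
Qed.
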